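(* In the parallel model with $P$ processors and a 2D layout (each processor has local memory of size $M=O(n^2/P)$), any classical Cholesky decomposition algorithm for $n{\times}n$ matrices has bandwidth cost $\Omega(n^2/P^{1/2})$ and latency cost $\Omega(P^{1/2})$.
   Context: The Cholesky decomposition of a real symmetric positive definite matrix $A$ is $A = LL^T$ with $L$ lower triangular; its entries satisfy $L(i,i)=\sqrt{A(i,i)-\sum_{k=1}^{i-1}L(i,k)^2}$ and $L(i,j)=\frac{1}{L(j,j)}\big(A(i,j)-\sum_{k=1}^{j-1}L(i,k)L(j,k)\big)$ for $i>j$. A ''classical'' Cholesky algorithm performs exactly these arithmetic operations, possibly reordered using only associativity and commutativity of addition (no pivoting, no distributivity). Parallel model: $P$ processors connected by a network, each with a local memory of $M$ words; the matrix is initially evenly distributed among the processors with only $O(1)$ copies stored overall (''2D layout'', $M=O(n^2/P)$). A message between two processors contains at most $M$ words. Bandwidth cost is the number of words sent or received and latency cost is the number of messages, both counted along the critical path of the algorithm (i.e., the lower bounds state that some processor must send or receive that many words/messages). *)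

From mathcomp Require Import all_boot.
From Stdlib Require List.

Set Implicit Arguments.
Unset Strict Implicit.
Unset Printing Implicit Defensive.

(* Symbolic model of a classical Cholesky computation on an n x n SPD matrix *)
(* A (indices in 'I_n).  The "words" a processor can hold are:              *)
(*   Lv i j        : the entry L(i,j)  (j <= i)                             *)
(*   Ps i j a S    : the partial sum  [a] A(i,j) - sum_{k in S} L(i,k)L(j,k) *)
(*                   (j <= i, S a subset of {k | k < j}; [a] says whether  *)
(*                   the term A(i,j) is included).                          *)
(* Special cases: Ps i j true set0  = the input entry A(i,j);               *)
(*                Ps i j false [set k] = the product L(i,k) L(j,k).        *)
Inductive item (n : nat) : Type :=
| Lv of 'I_n & 'I_n
| Ps of 'I_n & 'I_n & bool & {set 'I_n}.

Definition below (n : nat) (j : 'I_n) : {set 'I_n} := [set k : 'I_n | k < j].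

(* [produces m x]: x can be obtained by ONE arithmetic operation of the     *)
(* classical Cholesky algorithm from operands present in local memory m:   *)
(* a multiplication L(i,k)*L(j,k); an addition of two partial sums of the   *)
(* same entry with disjoint sets of terms (any association/commutation);   *)
(* the square root giving L(i,i); the division giving L(i,j), j < i.       *)
Definition produces (n : nat) (m : seq (item n)) (x : item n) : Prop :=
  match x with
  | Lv i j =>
      (i = j /\ List.In (Ps i i true (below i)) m)
      \/ (j < i /\ List.In (Ps i j true (below j)) m /\ List.In (Lv j j) m)
  | Ps i j a T =>
      j <= i /\
      ((a = false /\ exists k : 'I_n,
           k < j /\ T = [set k] /\ List.In (Lv i k) m /\ List.In (Lv j k) m)
       \/ (exists (a1 : bool) (S1 : {set 'I_n}) (a2 : bool) (S2 : {set 'I_n}),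
             List.In (Ps i j a1 S1) m /\ List.In (Ps i j a2 S2) m /\
             ~~ (a1 && a2) /\ [disjoint S1 & S2] /\
             a = a1 || a2 /\ T = S1 :|: S2))
  end.

(* Events of a parallel execution (serialized):                            *)
(*   Comp p x     : processor p performs one arithmetic operation giving x  *)
(*   Keep p m     : processor p discards words, keeping only m             *)
(*   Msg p q xs   : p sends the message xs (a list of words) to q          *)
Inductive event (n P : nat) : Type :=
| Comp of 'I_P & item n
| Keep of 'I_P & seq (item n)
| Msg of 'I_P & 'I_P & seq (item n).

Definition state (n P : nat) := 'I_P -> seq (item n).

Definition fits (n P M : nat) (s : state n P) : Prop := forall p, size (s p) <= M.

Definition step (n P M : nat) (s : state n P) (e : event n P) (s' : state n P)
  : Prop :=
  fits M s' /\
  match e with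
  | Comp p x => produces (s p) x /\ s' p = x :: s p /\
                (forall r, r != p -> s' r = s r)
  | Keep p m => (forall y, List.In y m -> List.In y (s p)) /\ s' p = m /\
                (forall r, r != p -> s' r = s r)
  | Msg p q xs => p != q /\ size xs <= M /\
                  (forall y, List.In y xs -> List.In y (s p)) /\
                  s' q = xs ++ s q /\ (forall r, r != q -> s' r = s r)
  end.

(* a run: the successive events with the state after each one *)
Fixpoint valid_run (n P M : nat) (s : state n P)
    (run : seq (event n P * state n P)) : Prop :=
  match run with
  | [::] => True
  | (e, s') :: rest => step M s e s' /\ valid_run M s' rest
  end.

Definition comp_item (n P : nat) (e : event n P) : option (item n) :=
  match e with Comp _ x => Some x | _ => None end.

Definition computed (n P : nat) (run : seq (event n P * state n P)) :=
  pmap (@comp_item n P) (map fst run).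

Definition words_of (n P : nat) (p : 'I_P) (e : event n P) : nat :=
  match e with
  | Msg a b xs => if (a == p) || (b == p) then size xs else 0
  | _ => 0
  end.

Definition msgs_of (n P : nat) (p : 'I_P) (e : event n P) : nat :=
  match e with
  | Msg a b _ => if (a == p) || (b == p) then 1 else 0
  | _ => 0
  end.

Definition bandwidth (n P : nat) (p : 'I_P) (run : seq (event n P * state n P)) :=
  sumn [seq words_of p ep.1 | ep <- run].

Definition latency (n P : nat) (p : 'I_P) (run : seq (event n P * state n P)) :=
  sumn [seq msgs_of p ep.1 | ep <- run].

(* 2D layout with constant C: M = O(n^2/P) (namely M * P <= C * n^2), each  *)
(* processor initially holds at most M words (so at most C n^2 / P entries, *)
(* i.e. an even distribution, and at most C n^2 = O(1) copies overall),    *)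
(* the initial memories contain only entries of A (lower triangle, A being *)
(* symmetric), and every entry of A is stored somewhere.                   *)
Definition layout_2D (C n P M : nat) (init : state n P) : Prop :=
  M * P <= C * n ^ 2 /\ fits M init /\
  (forall p x, List.In x (init p) ->
      exists i j : 'I_n, j <= i /\ x = Ps i j true set0) /\
  (forall i j : 'I_n, j <= i -> exists p, List.In (Ps i j true set0) (init p)).

(* a classical Cholesky algorithm execution from the initial layout: a      *)
(* valid run that performs every operation at most once (exactly the       *)
(* classical operations, no recomputation) and computes every L(i,j).      *)
Definition classical_cholesky_run (n P M : nat) (init : state n P)
    (run : seq (event n P * state n P)) : Prop :=
  valid_run M init run /\ List.NoDup (computed run) /\
  (forall i j : 'I_n, j <= i -> List.In (Lv i j) (computed run)).

(* Fix a processor p and cut its run into segments in each of which p sends or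
   receives about M words. A product L(i,k)L(j,k) computed by p in a segment is a
   triangle (i,j,k) over the entries that p holds at either end of the segment or
   communicates during it: the operands L(i,k), L(j,k) must have reached p, and
   the product term stays in partial sums of (i,j) until L(i,j) is computed from a
   word involving A(i,j), which also had to reach p. These are O(M) entries, so a
   Loomis-Whitney count bounds the products per segment by O(M^{3/2}), and by
   O(sqrt M (M + W)) over a run in which p communicates W words. Some processor
   computes (n/3)^3/P of the products feeding the lower-left block of L; with
   M P = O(n^2) this forces W = Omega(n^2/sqrt P), and since a message carries at
   most M words, Omega(sqrt P) messages. *)

From HB Require Import structures.
From mathcomp Require Import all_boot zify ring.
From Stdlib Require List PeanoNat.

Set Implicit Arguments.
Unset Strict Implicit.
Unset Printing Implicit Defensive.

Section ItemEqType.
Variable n : nat.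

Definition item_eqb (x y : item n) : bool :=
  match x, y with
  | Lv i j, Lv i' j' => (i == i') && (j == j')
  | Ps i j a T, Ps i' j' a' T' => [&& i == i', j == j', a == a' & T == T']
  | _, _ => false
  end.

Lemma item_eqP : Equality.axiom item_eqb.
Proof.
case=> [i j|i j a T] [i' j'|i' j' a' T'] /=; try by constructor.
- by apply: (iffP andP) => [[/eqP-> /eqP->]|[-> ->]].
- by apply: (iffP and4P) => [[/eqP-> /eqP-> /eqP-> /eqP->]|[-> -> -> ->]].
Qed.

HB.instance Definition _ := hasDecEq.Build (item n) item_eqP.
End ItemEqType.

Lemma InP (T : eqType) (x : T) (s : seq T) : reflect (List.In x s) (x \in s).
Proof.
elim: s => [|y s IH] /=; first by constructor.
rewrite inE; apply: (iffP orP) => [[/eqP->|/IH]|[->|/IH]]; by [left|right].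
Qed.

Lemma NoDup_uniq (T : eqType) (s : seq T) : List.NoDup s -> uniq s.
Proof.
elim: s => [|x s IH] //= /List.NoDup_cons_iff [xs /IH ->].
by rewrite andbT; apply/negP => /InP.
Qed.

Section PmapIndex.
Variables (T : Type) (U : eqType) (f : T -> option U) (d : T).

Lemma mem_pmap_nth s u :
  u \in pmap f s -> exists2 t, t < size s & f (nth d s t) = Some u.
Proof.
elim: s => [|y s IH] //=; case Ey: (f y) => [z|] /=.
- rewrite inE => /orP [/eqP ->|/IH [t Ht Et]]; first by exists 0.
  by exists t.+1.
- by case/IH=> t Ht Et; exists t.+1.
Qed.

Lemma nth_mem_pmap s t u : t < size s -> f (nth d s t) = Some u -> u \in pmap f s.
Proof.
elim: s t => [|y s IH] // [|t] /=; first by move=> _ ->; rewrite mem_head.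
by rewrite ltnS => Ht /(IH _ Ht); case: (f y) => //= z; rewrite inE orbC => ->.
Qed.

Lemma uniq_pmap_nth s t1 t2 u : uniq (pmap f s) -> t1 < size s -> t2 < size s ->
  f (nth d s t1) = Some u -> f (nth d s t2) = Some u -> t1 = t2.
Proof.
elim: s t1 t2 => [|y s IH] // t1 t2 Uys.
have Us : uniq (pmap f s) by move: Uys => /=; case: (f y) => //= z /andP [].
case: t1 t2 => [|t1] [|t2] //=; rewrite ?ltnS.
- by move=> _ Ht2 E1 /(nth_mem_pmap Ht2) ut; move: Uys; rewrite /= E1 /= ut.
- by move=> Ht1 _ /(nth_mem_pmap Ht1) ut E2; move: Uys; rewrite /= E2 /= ut.
- by move=> Ht1 Ht2 E1 E2; congr S; apply: IH E1 E2.
Qed.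
End PmapIndex.

Definition entry (n : nat) (x : item n) : 'I_n * 'I_n :=
  match x with Lv i j | Ps i j _ _ => (i, j) end.
Arguments entry {n}.

(* Words whose value depends on the input A(i,j) of their entry: L(i,j) and
   the partial sums that include A(i,j). *)
Definition involves_input (n : nat) (x : item n) : bool :=
  if x is Ps _ _ a _ then a else true.

(* Partial sums without A(i,j) have at least one product term, so such a sum
   with a single term can only come from the multiplication itself. *)
Definition wf_item (n : nat) (x : item n) : bool :=
  if x is Ps _ _ false T then T != set0 else true.
Arguments wf_item {n}.

Definition is_product (n P : nat) (e : event n P) (q : 'I_P) (i j k : 'I_n) :=
  if e is Comp r x then (r == q) && (x == Ps i j false [set k]) else false.

Lemma is_productP (n P : nat) (e : event n P) q i j k :
  reflect (e = Comp q (Ps i j false [set k])) (is_product e q i j k).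
Proof.
case: e => [r x|r m|r r' xs] /=; try by constructor.
by apply: (iffP andP) => [[/eqP-> /eqP->]|[-> ->]].
Qed.

Section Steps.
Variables (n P M : nat).
Implicit Types (s : state n P) (e : event n P) (q r : 'I_P) (i j k : 'I_n).

Definition holds_term s q i j k :=
  exists a (T : {set 'I_n}), k \in T /\ Ps i j a T \in s q.

Lemma step_holds_term s e s' q i j k : step M s e s' -> holds_term s' q i j k ->
  [\/ holds_term s q i j k, e = Comp q (Ps i j false [set k])
    | exists r xs, [/\ e = Msg r q xs,
        exists a (T : {set 'I_n}), k \in T /\ Ps i j a T \in xs
      & holds_term s r i j k]].
Proof.
move=> [_ He] [a [T [kT inq]]].
case: e He => [r x|r m|r1 r2 xs].
- move=> [Hp [Hr Ho]]; have [Eq|Nq] := eqVneq q r; last first.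
    by apply: Or31; exists a, T; rewrite -Ho.
  subst r; move: inq; rewrite Hr inE => /orP [/eqP Ex|inq].
    2: by apply: Or31; exists a, T.
  subst x; case: Hp => _ [[Ea [k' [_ [ET _]]]]|].
    by apply: Or32; move: kT; rewrite Ea ET inE => /eqP->.
  move=> [a1 [S1 [a2 [S2 [H1 [H2 [_ [_ [_ ET]]]]]]]]].
  apply: Or31; move: kT; rewrite ET inE => /orP [kS|kS].
  + by exists a1, S1; split => //; apply/InP.
  + by exists a2, S2; split => //; apply/InP.
- move=> [Hm [Hr Ho]]; apply: Or31; exists a, T; split => //.
  have [Eq|Nq] := eqVneq q r; last by rewrite -Ho.
  by subst r; apply/InP/Hm/InP; rewrite -Hr.
- move=> [_ [_ [Hxs [Hr2 Ho]]]]; have [Eq|Nq] := eqVneq q r2; last first.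
    by apply: Or31; exists a, T; rewrite -Ho.
  subst r2; move: inq; rewrite Hr2 mem_cat => /orP [inx|inq]; last first.
    by apply: Or31; exists a, T.
  apply: Or33; exists r1, xs; split => //; first by exists a, T.
  by exists a, T; split => //; apply/InP/Hxs/InP.
Qed.

Lemma step_wf s e s' : step M s e s' ->
  (forall q, all wf_item (s q)) -> forall q, all wf_item (s' q).
Proof.
move=> [_ He] G q; case: e He => [r x|r m|r1 r2 xs].
- move=> [Hp [Hr Ho]]; have [Eq|Nq] := eqVneq q r; last by rewrite Ho.
  subst r; rewrite Hr /= G andbT.
  case: x Hp {Hr Ho} => // i j [] T //= [_ [[_ [k [_ [ET _]]]]|]].
    by rewrite ET; apply/set0Pn; exists k; rewrite inE.
  move=> [a1 [S1 [a2 [S2 [H1 [H2 [_ [_ [Ea ET]]]]]]]]].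
  move: Ea; case: a1 H1 => //; case: a2 H2 => // H2 H1 _.
  have /set0Pn [k kS] := allP (G q) _ (introT (InP _ _) H1).
  by rewrite ET; apply/set0Pn; exists k; rewrite inE kS.
- move=> [Hm [Hr Ho]]; have [Eq|Nq] := eqVneq q r; last by rewrite Ho.
  by subst r; rewrite Hr; apply/allP => x /InP /Hm /InP; apply: (allP (G q)).
- move=> [_ [_ [Hxs [Hr2 Ho]]]]; have [Eq|Nq] := eqVneq q r2; last by rewrite Ho.
  subst r2; rewrite Hr2 all_cat G andbT.
  by apply/allP => x /InP /Hxs /InP; apply: (allP (G r1)).
Qed.

Lemma product_operands s s' q i j k :
  step M s (Comp q (Ps i j false [set k])) s' -> all wf_item (s q) ->
  [/\ k < j, j <= i, Lv i k \in s q & Lv j k \in s q].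
Proof.
move=> [_ [[ji Hp] _]] G.
case: Hp => [[_ [k' [kj [Ek [/InP Hi /InP Hj]]]]]|].
  by move/setP: Ek => /(_ k); rewrite !inE eqxx => /esym/eqP->.
move=> [a1 [S1 [a2 [S2 [H1 [H2 [_ [Hd [Ea ET]]]]]]]]].
have /norP [/negbTE E1 /negbTE E2] : ~~ (a1 || a2) by rewrite -Ea.
subst a1 a2.
have /set0Pn [k1 k1S] := allP G _ (introT (InP _ _) H1).
have /set0Pn [k2 k2S] := allP G _ (introT (InP _ _) H2).
have: k1 \in [set k] by rewrite ET inE k1S.
have: k2 \in [set k] by rewrite ET inE k2S orbT.
rewrite !inE => /eqP E2 /eqP E1; subst k1 k2.
by move/pred0P: Hd => /(_ k) /=; rewrite k1S k2S.
Qed.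

Lemma step_involves_input s e s' q x : step M s e s' -> involves_input x ->
  x \in s' q -> (exists2 y, involves_input y & entry y = entry x /\ y \in s q)
               \/ exists r xs, e = Msg r q xs /\ x \in xs.
Proof.
move=> [_ He] Hx; case: e He => [r y|r m|r1 r2 xs].
- move=> [Hp [Hr Ho]]; have [Eq|Nq] := eqVneq q r; last first.
    by rewrite Ho // => xin; left; exists x.
  subst r; rewrite Hr inE => /orP [/eqP Exy|xin]; last by left; exists x.
  subst y; left; case: x Hx Hp {Hr} => [i j|i j [] T] //= _.
  + case=> [[<- /InP H]|[_ [/InP H _]]]; first by exists (Ps i i true (below i)).
    by exists (Ps i j true (below j)).
  + case=> _ [[//]|[a1 [S1 [a2 [S2 [/InP H1 [/InP H2 [_ [_ [Ea _]]]]]]]]]].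
    case: a1 Ea H1 => [_ H1|/= Ea _]; first by exists (Ps i j true S1).
    by subst a2; exists (Ps i j true S2).
- move=> [Hm [Hr Ho]]; have [Eq|Nq] := eqVneq q r; last first.
    by rewrite Ho // => xin; left; exists x.
  by subst r; rewrite Hr => /InP /Hm /InP xin; left; exists x.
- move=> [_ [_ [_ [Hr2 Ho]]]]; have [Eq|Nq] := eqVneq q r2; last first.
    by rewrite Ho // => xin; left; exists x.
  subst r2; rewrite Hr2 mem_cat => /orP [xin|xin]; last by left; exists x.
  by right; exists r1, xs.
Qed.
End Steps.

Lemma valid_run_nth (n P M : nat) (s0 : state n P) run d :
  valid_run M s0 run -> forall t, t < size run ->
  step M (if t is t'.+1 then (nth d run t').2 else s0) (nth d run t).1 (nth d run t).2.
Proof.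
elim: run s0 => [|[e s] r IH] s0 //= [Hs Hr] [|t] //= Ht.
by have := IH s Hr t Ht; case: t Ht.
Qed.

Lemma bandwidth_le_latency (n P M : nat) (s0 : state n P) run (p : 'I_P) :
  valid_run M s0 run -> bandwidth p run <= M * latency p run.
Proof.
rewrite /bandwidth /latency.
elim: run s0 => [|[e s] r IH] s0 //= [[_ He] Hr]; rewrite mulnDr leq_add ?(IH s) //.
by case: e He => //= q1 q2 xs [_ [Hs _]]; case: ifP; rewrite ?muln1.
Qed.

Lemma card_fibers (X Y : finType) (A : {set X * Y}) :
  #|A| = \sum_(y : Y) #|[set x | (x, y) \in A]|.
Proof.
pose F x y := nat_of_bool ((x, y) \in A).
transitivity (\sum_(z : X * Y) F z.1 z.2).
  by rewrite -sum1_card big_mkcond; apply: eq_bigr => -[x y] _; rewrite /F; case: ifP.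
have -> : \sum_(z : X * Y) F z.1 z.2 = \sum_x \sum_y F x y by rewrite pair_bigA.
rewrite exchange_big; apply: eq_bigr => y _.
rewrite -sum1_card [RHS]big_mkcond; apply: (@eq_bigr nat 0 addn) => x _.
by rewrite inE /F; case: ifP.
Qed.

Definition triangles (T : finType) (U : {set T * T}) : {set T * T * T} :=
  [set t | [&& (t.1.1, t.2) \in U, (t.1.2, t.2) \in U & t.1 \in U]].

(* For fixed k, with D = [set i | (i, k) \in U], the triangles (i, j, k) number
   at most min(#|D|^2, #|U|) <= #|D| * s, and these D partition U. *)
Lemma card_triangles (T : finType) (U : {set T * T}) s :
  #|U| <= s * s -> #|triangles U| <= #|U| * s.
Proof.
move=> Us; rewrite [#|triangles U|]card_fibers card_fibers big_distrl /=.
apply: leq_sum => k _.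
set C := [set ij | (ij, k) \in triangles U]; set D := [set i | (i, k) \in U].
have CD : #|C| <= #|D| * #|D|.
  rewrite -cardsX; apply: subset_leq_card; apply/subsetP => -[i j].
  by rewrite !inE /= => /and3P [-> -> _].
have CU : #|C| <= #|U|.
  rewrite -[#|U|]cardsE; apply: subset_leq_card; apply/subsetP => ij.
  by rewrite !inE /= => /and3P [_ _ ->].
have [Ds|Ds] := leqP #|D| s.
  by apply: leq_trans CD _; rewrite leq_mul2l Ds orbT.
by apply: leq_trans CU (leq_trans Us _); rewrite leq_mul2r (ltnW Ds) orbT.
Qed.

Lemma card_bigcup_le (I T : finType) (A : I -> {set T}) :
  #|\bigcup_(i : I) A i| <= \sum_(i : I) #|A i|.
Proof.
elim/big_ind2: _ => [|x1 x2 y1 y2 H1 H2|i _] //; first by rewrite cards0.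
by apply: leq_trans (leq_add H1 H2); rewrite cardsU leq_subr.
Qed.

Lemma card_bigcup_max (I T : finType) (A : I -> {set T}) (i0 : I) :
  exists i, #|\bigcup_(j : I) A j| <= #|I| * #|A i|.
Proof.
exists [arg max_(i > i0) #|A i|]; case: arg_maxnP => // im _ Him.
apply: leq_trans (card_bigcup_le A) _; rewrite -sum_nat_const.
by apply: leq_sum => i _; apply: Him.
Qed.

Lemma card_ord_interval n lo len : lo + len <= n ->
  len <= #|[set i : 'I_n | lo <= i < lo + len]|.
Proof.
move=> H; have fP (x : 'I_len) : lo + x < n by apply: leq_trans H; rewrite ltn_add2l.
have f_inj : injective (fun x => Ordinal (fP x)).
  by move=> x y /(congr1 val) /= /addnI /val_inj.
rewrite -[len in len <= _]card_ord -cardsT -(card_imset _ f_inj).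
apply: subset_leq_card; apply/subsetP => _ /imsetP [x _ ->].
by rewrite inE /= leq_addr ltn_add2l ltn_ord.
Qed.

Section ClassicalRun.
Variables (n P M : nat) (init : state n P) (run : seq (event n P * state n P)).
(* [e0] only pads the indices beyond the end of the run. *)
Variable e0 : event n P.

Definition event_at t := nth e0 (map fst run) t.
Definition state_at t := if t is t'.+1 then (nth (e0, init) run t').2 else init.

Local Notation N := (size run).
Local Notation ev := event_at.
Local Notation st := state_at.

Lemma computed_event x : List.In x (computed run) ->
  exists2 t, t < N & exists q, ev t = Comp q x.
Proof.
move/InP/(mem_pmap_nth e0) => [t]; rewrite size_map -/(ev t) => Ht.
by case E: (ev t) => //= [q y] [<-]; exists t => //; exists q.
Qed.

Lemma computed_once x t1 t2 q1 q2 : List.NoDup (computed run) ->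
  t1 < N -> t2 < N -> ev t1 = Comp q1 x -> ev t2 = Comp q2 x -> t1 = t2.
Proof.
move=> /NoDup_uniq Uc H1 H2 E1 E2.
by apply: (uniq_pmap_nth (d := e0) (u := x) Uc); rewrite ?size_map -/(ev _) ?E1 ?E2.
Qed.

Hypothesis Hv : valid_run M init run.
Hypothesis Hinit : forall q x, List.In x (init q) ->
  exists i j : 'I_n, j <= i /\ x = Ps i j true set0.

Lemma run_step t : t < N -> step M (st t) (ev t) (st t.+1).
Proof.
move=> Ht; rewrite /ev (nth_map (e0, init)) //.
by have := valid_run_nth (e0, init) Hv Ht; case: t Ht.
Qed.

Hypothesis Hfit : fits M init.

Lemma run_fits t : t <= N -> fits M (st t).
Proof. by case: t => [|t] // /run_step []. Qed.

Lemma run_wf t : t <= N -> forall q, all wf_item (st t q).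
Proof.
elim: t => [|t IH] Ht q.
  by apply/allP => x /InP /Hinit [i [j [_ ->]]].
by apply: (step_wf (run_step Ht)); apply: IH; apply: ltnW.
Qed.

Lemma held_term_produced t q i j k : t <= N -> holds_term (st t) q i j k ->
  exists2 u, u < t & exists r, ev u = Comp r (Ps i j false [set k]).
Proof.
elim: t q => [|t IH] q Ht.
  by case=> a [T [kT /InP /Hinit [i' [j' [_ [_ _ _ ET]]]]]]; move: kT; rewrite ET inE.
have earlier r : holds_term (st t) r i j k ->
    exists2 u, u < t.+1 & exists r, ev u = Comp r (Ps i j false [set k]).
  by case/IH => [|u ut Hu]; [apply: ltnW | exists u => //; apply: ltnW].
case/(step_holds_term (run_step Ht)) => [/earlier //|Ev|[r [xs [_ _ /earlier //]]]].
by exists t => //; exists q.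
Qed.

Lemma Lv_operand t q i j : t < N -> ev t = Comp q (Lv i j) ->
  Ps i j true (below j) \in st t q.
Proof.
move=> Ht Ev; have := run_step Ht; rewrite Ev => [[_ [/= Hp _]]].
by case: Hp => [[<- /InP //]|[_ [/InP H _]]].
Qed.

Lemma Lv_holds_term t q i j (k : 'I_n) : t < N -> ev t = Comp q (Lv i j) -> k < j ->
  holds_term (st t) q i j k.
Proof. by move=> Ht Ev kj; exists true, (below j); rewrite inE kj Lv_operand. Qed.

Hypothesis Hnd : List.NoDup (computed run).

Lemma product_once u1 u2 q1 q2 i j k : u1 < N -> u2 < N ->
  ev u1 = Comp q1 (Ps i j false [set k]) -> ev u2 = Comp q2 (Ps i j false [set k]) ->
  u1 = u2 /\ q1 = q2.
Proof.
move=> H1 H2 E1 E2; have Eu := computed_once Hnd H1 H2 E1 E2.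
by subst u2; split => //; move: E2; rewrite E1 => [[]].
Qed.

Hypothesis Hall : forall i j : 'I_n, j <= i -> List.In (Lv i j) (computed run).

Lemma product_performed (i j k : 'I_n) : k < j -> j <= i ->
  exists2 u, u < N & exists q, ev u = Comp q (Ps i j false [set k]).
Proof.
move=> kj ji; have [u Hu [q Hq]] := computed_event (Hall ji).
have [v vu Hv'] := held_term_produced (ltnW Hu) (Lv_holds_term Hu Hq kj).
by exists v => //; apply: ltn_trans Hu.
Qed.

Section Processor.
Variable p : 'I_P.

Definition msg_words (e : event n P) : seq (item n) :=
  if e is Msg r q xs then (if (r == p) || (q == p) then xs else [::]) else [::].

Definition comm_words a b := flatten [seq msg_words (ev u) | u <- index_iota a b].

Local Notation traffic a b := (size (comm_words a b)).

Lemma comm_words_cat a b c : a <= b <= c ->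
  comm_words a c = comm_words a b ++ comm_words b c.
Proof.
move=> /andP [ab bc]; rewrite /comm_words -flatten_cat -map_cat /index_iota.
have -> : c - a = (b - a) + (c - b) by lia.
by rewrite iotaD subnKC.
Qed.

Lemma comm_words_rcons a t : a <= t ->
  comm_words a t.+1 = comm_words a t ++ msg_words (ev t).
Proof.
move=> Hat; rewrite (@comm_words_cat a t) ?Hat ?leqnSn //.
by rewrite /comm_words /index_iota subSnn /= cats0.
Qed.

Lemma mem_comm_words a b t x : a <= t < b -> x \in msg_words (ev t) ->
  x \in comm_words a b.
Proof.
move=> /andP [Hat tb] xin; rewrite (@comm_words_cat a t.+1 b) ?tb ?(leqW Hat) //.
by rewrite comm_words_rcons // !mem_cat xin orbT.
Qed.

Lemma size_msg_words e : size (msg_words e) = words_of p e.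
Proof. by case: e => //= r q xs; case: ifP. Qed.

Lemma size_msg_words_le t : t < N -> size (msg_words (ev t)) <= M.
Proof.
move=> Ht; have [_] := run_step Ht; rewrite size_msg_words.
by case: (ev t) => //= r q xs [_ [Hs _]]; case: ifP.
Qed.

Lemma bandwidth_traffic : bandwidth p run = traffic 0 N.
Proof.
rewrite /comm_words size_flatten /shape -map_comp /index_iota subn0.
rewrite (eq_map (fun u => size_msg_words (ev u))) -(size_map fst run).
rewrite map_comp (_ : [seq ev u | u <- _] = map fst run); last exact: mkseq_nth.
by rewrite /bandwidth -map_comp.
Qed.

(* A word involving A(i,j) can only be computed from another one, so its entry
   was already held by p or reached p in a message. *)
Lemma input_origin a t x : a <= t -> t <= N -> x \in st t p -> involves_input x ->
  entry x \in map entry (st a p ++ comm_words a t).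
Proof.
move=> /subnKC <-; elim: (t - a) x => [|d IH] x.
  by rewrite addn0 /comm_words /index_iota subnn cats0 => _ xin _; apply: map_f.
rewrite addnS => Ht xin Hx; move: xin => /(step_involves_input (run_step Ht) Hx).
rewrite comm_words_rcons ?leq_addr // catA map_cat mem_cat.
case=> [[y Hy [<- yin]]|[r [xs [Ev xin]]]]; first by rewrite IH ?(ltnW Ht).
by apply/orP; right; rewrite Ev /= eqxx orbT map_f.
Qed.

Definition segment_entries a b : {set 'I_n * 'I_n} :=
  [set x in map entry (st a p ++ st b p ++ comm_words a b)].

Lemma segment_entries_prefix a u b x : a <= u <= b ->
  x \in map entry (st a p ++ comm_words a u) ->
  x \in map entry (st a p ++ st b p ++ comm_words a b).
Proof.
move=> aub; rewrite (comm_words_cat aub) !map_cat !mem_cat.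
by case/orP=> [->|->]; rewrite ?orbT.
Qed.

Lemma segment_entries_end a b i j k : holds_term (st b) p i j k ->
  (i, j) \in segment_entries a b.
Proof.
case=> a' [T [_ HT]]; rewrite inE !map_cat !mem_cat.
by rewrite (map_f entry HT) orbT.
Qed.

Lemma card_segment_entries a b : a <= b <= N ->
  #|segment_entries a b| <= 2 * M + traffic a b.
Proof.
move=> /andP [ab bN]; rewrite cardsE (leq_trans (card_size _)) // size_map !size_cat.
by rewrite addnA mul2n -addnn leq_add2r leq_add ?(run_fits (leq_trans ab bN)) ?run_fits.
Qed.

Section ProductTerm.
Variables (a b t0 : nat) (i j k : 'I_n).
Hypotheses (Ha : a <= t0) (Hb : t0 < b) (HN : b <= N).
Hypothesis Hprod : ev t0 = Comp p (Ps i j false [set k]).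

Let t0N : t0 < N := leq_trans Hb HN.

Lemma no_holder_before t q : t <= t0 -> ~ holds_term (st t) q i j k.
Proof.
move=> tt0 /(held_term_produced (leq_trans tt0 (ltnW t0N))) [u ut [r Hr]].
have [Eu _] := product_once (leq_trans ut (ltnW (leq_ltn_trans tt0 t0N))) t0N Hr Hprod.
by move: ut; rewrite Eu ltnNge tt0.
Qed.

Hypothesis Hout : (i, j) \notin segment_entries a b.

(* As (i,j) is not a segment entry, the partial sums carrying L(i,k)L(j,k)
   can neither leave p nor survive until b. *)
Lemma holders_after t q : t0 < t -> t <= N -> holds_term (st t) q i j k ->
  q = p /\ t < b.
Proof.
have before_b t' : t' <= b -> holds_term (st t') p i j k -> t' < b.
  rewrite leq_eqVlt => /orP [/eqP -> /(@segment_entries_end a)|//].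
  by rewrite (negbTE Hout).
elim: t q => [//|t IH] q; rewrite ltnS => t0t HtN Hh.
have holder_t r : holds_term (st t) r i j k -> r = p /\ t < b.
  move=> Hr; have [tt0|t0t'] := leqP t t0; first by case: (no_holder_before tt0 Hr).
  exact: IH (ltnW HtN) Hr.
case: (step_holds_term (run_step HtN) Hh) => [/holder_t [Eq tb]|Ev|].
- by subst q; split => //; apply: before_b.
- have [Et Eq] := product_once HtN t0N Ev Hprod; subst t q.
  by split => //; apply: before_b.
- move=> [r [xs [Ev [a' [T [_ HT]]] /holder_t [Er tb]]]]; subst r; case/negP: Hout.
  have Hat : a <= t := leq_trans Ha t0t.
  have Hm : Ps i j a' T \in comm_words a b.
    by apply: (@mem_comm_words a b t (Ps i j a' T)); rewrite ?Hat ?tb // Ev /= eqxx.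
  rewrite inE; apply: (@segment_entries_prefix a b b).
    by rewrite (leq_trans Hat (ltnW tb)) leqnn.
  by rewrite map_cat mem_cat; apply/orP; right; apply: (map_f entry Hm).
Qed.

End ProductTerm.

(* Otherwise p itself would compute L(i,j) inside the segment, from a word
   involving A(i,j) whose entry must have reached p. *)
Lemma product_entry_in_segment a b t0 i j k : a <= t0 -> t0 < b -> b <= N ->
  ev t0 = Comp p (Ps i j false [set k]) -> (i, j) \in segment_entries a b.
Proof.
move=> Ha Hb HN Hprod; apply/idPn => Hout.
have t0N : t0 < N := leq_trans Hb HN.
have := run_step t0N; rewrite Hprod => /product_operands /(_ (run_wf (ltnW t0N) p)).
case=> kj ji _ _.
have [u uN [q Hq]] := computed_event (Hall ji).
have Hh := Lv_holds_term uN Hq kj.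
have [ut0|t0u] := leqP u t0; first exact: (no_holder_before Hb HN Hprod ut0 Hh).
have [Eq ub] := holders_after Ha Hb HN Hprod Hout t0u (ltnW uN) Hh; subst q.
have au : a <= u := ltnW (leq_ltn_trans Ha t0u).
case/negP: Hout; rewrite inE; apply: (@segment_entries_prefix a u).
  by rewrite au ltnW.
by have := input_origin au (ltnW uN) (Lv_operand uN Hq) isT.
Qed.

Definition products a b : {set 'I_n * 'I_n * 'I_n} :=
  [set x | has (fun u => is_product (ev u) p x.1.1 x.1.2 x.2) (index_iota a b)].

Lemma products_nil a : products a a = set0.
Proof. by apply/setP => x; rewrite !inE /index_iota subnn. Qed.

Lemma card_products_cat a b c : a <= b <= c ->
  #|products a c| <= #|products a b| + #|products b c|.
Proof.
move=> /andP [ab bc]; apply: leq_trans (leq_card_setU _ _).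
apply: subset_leq_card; apply/subsetP => x; rewrite !inE => /hasP [u].
rewrite mem_index_iota => /andP [au uc] Hu; have [ub|bu] := ltnP u b.
- by apply/orP; left; apply/hasP; exists u; rewrite ?mem_index_iota ?au.
- by apply/orP; right; apply/hasP; exists u; rewrite ?mem_index_iota ?bu.
Qed.

Lemma products_sub_triangles a b : a <= b <= N ->
  products a b \subset triangles (segment_entries a b).
Proof.
move=> /andP [ab bN]; apply/subsetP => -[[i j] k]; rewrite inE /= => /hasP [u].
rewrite mem_index_iota => /andP [au ub] /is_productP Hu.
have uN : u < N := leq_trans ub bN.
have := run_step uN; rewrite Hu => /product_operands /(_ (run_wf (ltnW uN) p)).
case=> _ _ Hi Hj; have aub : a <= u <= b by rewrite au ltnW.
have Hij := product_entry_in_segment au ub bN Hu; rewrite inE in Hij.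
rewrite !inE /= Hij andbT -[(i, k)]/(entry (Lv i k)) -[(j, k)]/(entry (Lv j k)).
by rewrite !(segment_entries_prefix aub) ?(input_origin au (ltnW uN)).
Qed.

Lemma card_segment_products a b s : a <= b <= N -> 2 * M + traffic a b <= s * s ->
  #|products a b| <= (2 * M + traffic a b) * s.
Proof.
move=> abN Hs; have HU := card_segment_entries abN.
apply: leq_trans (subset_leq_card (products_sub_triangles abN)) _.
apply: leq_trans (card_triangles (leq_trans HU Hs)) _.
by rewrite leq_mul2r HU orbT.
Qed.

Lemma segment_split a : a < N -> M <= traffic a N ->
  exists b, a < b <= N /\ M <= traffic a b <= 2 * M.
Proof.
move=> aN MN; have Hex : exists b, (a < b <= N) && (M <= traffic a b).
  by exists N; rewrite aN leqnn MN.
case: (ex_minnP Hex) => b /andP [/andP [ab bN] Mb] bmin.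
exists b; rewrite ab bN Mb; split => //.
have [c Ec] : exists c, b = c.+1 by exists b.-1; rewrite prednK // (leq_ltn_trans _ ab).
subst b; rewrite ltnS in ab; rewrite comm_words_rcons // size_cat mul2n -addnn.
rewrite leq_add ?size_msg_words_le //.
have [ac|ca|<-] := ltngtP a c.
- rewrite leqNgt; apply/negP => Mc.
  by have := bmin c; rewrite ac (ltnW bN) (ltnW Mc) ltnn => /(_ isT).
- by move: ab; rewrite leqNgt ca.
- by rewrite /comm_words /index_iota subnn.
Qed.

Lemma card_products s : 4 * M <= s * s -> forall a, a <= N ->
  #|products a N| <= 4 * s * (M + traffic a N).
Proof.
move=> Hs a; have [m] := ubnP (N - a); elim: m a => // m IH a Hm aN.
have [->|aN'] := eqVneq a N; first by rewrite products_nil cards0.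
have {aN'} aN : a < N by rewrite ltn_neqAle aN' aN.
have [WN|MN] := ltnP (traffic a N) M.
  apply: leq_trans (card_segment_products (s := s) _ _) _.
  - by rewrite (ltnW aN) leqnn.
  - by apply: leq_trans Hs; lia.
  - by nia.
have [b [/andP [ab bN] /andP [Mb b2M]]] := segment_split aN MN.
have Hab : #|products a b| <= 4 * s * traffic a b.
  apply: leq_trans (card_segment_products (s := s) _ _) _.
  - by rewrite (ltnW ab).
  - by apply: leq_trans Hs; lia.
  - by nia.
have Hb := IH b (leq_trans (ltn_sub2l aN ab) Hm) bN.
apply: leq_trans (card_products_cat (a := a) (b := b) _) _; first by rewrite (ltnW ab).
rewrite (@comm_words_cat a b) ?(ltnW ab) // size_cat.
by nia.
Qed.

End Processor.

(* The (n/3)^3 multiplications with k, j, i in the first, second and last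
   third of the indices are all among the classical operations. *)
Lemma busy_processor (p0 : 'I_P) :
  exists p, (n %/ 3) ^ 3 <= P * #|products p 0 N|.
Proof.
have [p Hp] := card_bigcup_max (fun q => products q 0 N) p0.
exists p; rewrite card_ord in Hp; apply: leq_trans Hp; set a := n %/ 3.
pose third lo := [set i : 'I_n | lo <= i < lo + a].
apply: (@leq_trans #|setX (setX (third (a + a)) (third a)) (third 0)|).
  rewrite !cardsX (_ : a ^ 3 = a * a * a); last by rewrite !expnS expn0 muln1 mulnA.
  by rewrite !leq_mul ?card_ord_interval //; lia.
apply/subset_leq_card/subsetP => -[[i j] k].
rewrite !inE /= => /andP [/and3P [/andP [ai _] aj ja] ka].
have [u uN [q Hq]] := @product_performed i j k ltac:(lia) ltac:(lia).
apply/bigcupP; exists q => //; rewrite inE; apply/hasP; exists u.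
  by rewrite mem_index_iota.
exact/is_productP.
Qed.

End ClassicalRun.

Lemma communication_volume C n P M init run s :
  @layout_2D C n P M init -> classical_cholesky_run M init run -> 0 < P ->
  4 * M <= s * s -> exists p : 'I_P, (n %/ 3) ^ 3 <= P * (4 * s * (M + bandwidth p run)).
Proof.
move=> [_ [Hfit [Hinit _]]] [Hv [Hnd Hall]] P0 Hs.
pose p0 := Ordinal P0; pose e0 : event n P := Keep p0 [::].
have [p Hp] := busy_processor e0 Hv Hinit Hall p0.
exists p; apply: leq_trans Hp _; rewrite leq_mul2l (bandwidth_traffic run e0).
by rewrite (card_products e0 Hv Hinit Hfit Hnd Hall p Hs (leq0n _)) orbT.
Qed.

Lemma layout_mem_pos C n P M (init : state n P) :
  0 < n -> layout_2D C M init -> 0 < M.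
Proof.
move=> n0 [_ [Hfit [_ Hstore]]].
have [q Hq] := Hstore (Ordinal n0) (Ordinal n0) (leqnn _).
by apply: leq_trans (Hfit q); case: (init q) Hq.
Qed.

Lemma dim_gt2 C n P M : 0 < M -> M * P <= C * n ^ 2 -> 4 * C < P -> 2 < n.
Proof.
move=> M0 MP CP; rewrite ltnNge; apply/negP => n2.
have : C * n ^ 2 <= C * 4 by rewrite leq_mul2l (@leq_exp2r n 2 2) ?n2 ?orbT.
by move/(leq_trans MP); nia.
Qed.

Lemma sqrt_bounds M : 0 < M -> exists s, 4 * M <= s * s /\ s * s <= 13 * M.
Proof.
move=> M0; exists (Nat.sqrt (4 * M)).+1.
have [lo hi] := PeanoNat.Nat.sqrt_spec (4 * M) (PeanoNat.Nat.le_0_l _).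
set r := Nat.sqrt _ in lo hi *.
have : r <= r * r by case: r {lo hi} => // r; rewrite leq_pmulr.
lia.
Qed.

Lemma cube_third n : 2 < n -> n ^ 3 <= 125 * (n %/ 3) ^ 3.
Proof. by move=> n2; rewrite -[125]/(5 ^ 3) -expnMn leq_exp2r //; lia. Qed.

Lemma memory_traffic_bound c C n P M s X : 0 < n -> M * P <= C * n ^ 2 ->
  s * s <= 13 * M -> n ^ 3 <= c * (P * (s * X)) ->
  n ^ 4 <= c ^ 2 * 13 * C * P * X ^ 2.
Proof.
move=> n0 MP s13 n3; rewrite -(@leq_pmul2l (n ^ 2)) ?expn_gt0 ?n0 //.
have -> : n ^ 2 * n ^ 4 = n ^ 3 * n ^ 3 by rewrite -!expnD.
apply: leq_trans (leq_mul n3 n3) _.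
have -> : c * (P * (s * X)) * (c * (P * (s * X))) = c ^ 2 * (P * P * X * X) * (s * s).
  by ring.
apply: (@leq_trans (c ^ 2 * (P * P * X * X) * (13 * M))).
  by rewrite leq_mul2l s13 orbT.
have -> : c ^ 2 * (P * P * X * X) * (13 * M) = c ^ 2 * 13 * (P * X * X) * (M * P) by ring.
apply: leq_trans (_ : _ <= c ^ 2 * 13 * (P * X * X) * (C * n ^ 2)) _.
  by rewrite leq_mul2l MP orbT.
by apply: eq_leq; ring.
Qed.

(* If p communicated fewer than M words, [n^4 <= 4 K P M^2] would force
   [P <= 4 K C^2] through [M P <= C n^2]. *)
Lemma bandwidth_bound K C n P M W : 0 < n -> M * P <= C * n ^ 2 ->
  n ^ 4 <= K * P * (M + W) ^ 2 -> 4 * K * C ^ 2 < P -> n ^ 4 <= 4 * K * P * W ^ 2.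
Proof.
move=> n0 MP Hn KP; have [MW|WM] := leqP M W.
  apply: leq_trans Hn _; have -> : 4 * K * P * W ^ 2 = K * P * (2 * W) ^ 2 by ring.
  by rewrite leq_mul2l leq_exp2r // ?orbT; lia.
exfalso; apply/negP: KP; rewrite -leqNgt.
suff : P * n ^ 4 <= 4 * K * C ^ 2 * n ^ 4 by rewrite leq_pmul2r ?expn_gt0 ?n0.
apply: leq_trans (leq_mul (leqnn P) Hn) _.
have MW2 : (M + W) ^ 2 <= 4 * M ^ 2 by rewrite -[4]/(2 ^ 2) -expnMn leq_exp2r //; lia.
apply: (@leq_trans (4 * K * (M * P) ^ 2)).
  have -> : 4 * K * (M * P) ^ 2 = P * (K * P * (4 * M ^ 2)) by ring.
  by rewrite !leq_mul2l MW2 !orbT.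
have -> : 4 * K * C ^ 2 * n ^ 4 = 4 * K * (C * n ^ 2) ^ 2 by ring.
by rewrite leq_mul2l leq_exp2r ?MP ?orbT.
Qed.

Lemma latency_from_bandwidth K C n P M W L : 0 < n -> M * P <= C * n ^ 2 ->
  n ^ 4 <= K * P * W ^ 2 -> W <= M * L -> P <= K * C ^ 2 * L ^ 2.
Proof.
move=> n0 MP Hn WL; rewrite -(@leq_pmul2r (n ^ 4)) ?expn_gt0 ?n0 //.
apply: leq_trans (leq_mul (leqnn P) Hn) _.
apply: (@leq_trans (K * (M * P) ^ 2 * L ^ 2)).
  have -> : K * (M * P) ^ 2 * L ^ 2 = P * (K * P * (M * L) ^ 2) by ring.
  by rewrite !leq_mul2l leq_exp2r ?WL ?orbT.
have -> : K * C ^ 2 * L ^ 2 * n ^ 4 = K * (C * n ^ 2) ^ 2 * L ^ 2 by ring.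
by rewrite leq_mul2r leq_mul2l leq_exp2r ?MP ?orbT.
Qed.

Theorem corollary2p6 (C : nat) :
  exists d P0 : nat, 0 < d /\
    forall (n P M : nat) (init : state n P)
           (run : seq (event n P * state n P)),
      0 < n -> P0 <= P ->
      @layout_2D C n P M init ->
      @classical_cholesky_run n P M init run ->
      (exists p : 'I_P, n ^ 4 <= P * (d * bandwidth p run) ^ 2) /\
      (exists p : 'I_P, P <= (d * latency p run) ^ 2).
Proof.
(* 500 stays abstract: unary numerals like 500^2 * 13 are too big to compute with. *)
have [c Ec] : exists c, c = 500 by exists 500.
pose K := c ^ 2 * 13; have K0 : 0 < K by rewrite muln_gt0 expn_gt0 Ec.
pose d := 4 * K * (C ^ 3 + C) + 1.
have [d0 d_sq] : 0 < d /\ d <= d ^ 2 by rewrite expnS expn1 leq_pmulr /d addn1.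
exists d, d; split => // n P M init run n0 dP lay crun.
have [MP _] := lay; have M0 := layout_mem_pos n0 lay.
have n2 : 2 < n by apply: (dim_gt2 M0 MP); apply: leq_trans dP; rewrite /d; nia.
have [s [s4 s13]] := sqrt_bounds M0.
have [p Hp] := communication_volume lay crun (leq_trans d0 dP) s4.
set W := bandwidth p run in Hp *.
have n3 : n ^ 3 <= c * (P * (s * (M + W))).
  by apply: leq_trans (cube_third n2) _; move: Hp; rewrite Ec; nia.
have Hn4 := memory_traffic_bound n0 MP s13 n3; rewrite -/K in Hn4.
have [dK1 dK3] : 4 * (K * C) <= d ^ 2 /\ 4 * (K * C) * C ^ 2 < d.
  by split; [apply: (leq_trans _ d_sq)|]; rewrite /d; nia.
have Hbw := bandwidth_bound n0 MP Hn4 (leq_trans dK3 dP).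
have Hlat := latency_from_bandwidth n0 MP Hbw (bandwidth_le_latency p crun.1).
split; exists p.
- apply: leq_trans Hbw _; have -> : P * (d * W) ^ 2 = d ^ 2 * P * W ^ 2 by ring.
  by rewrite !leq_mul2r dK1 !orbT.
- by apply: leq_trans Hlat _; rewrite expnMn leq_mul2r (leq_trans (ltnW dK3)) ?orbT.
Qed.
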